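(* Let $q=p^m$ with $p$ an odd prime and $m$ a positive integer. Let $\delta\in\mathbb{F}_{q^2}$, $b_1,b_2,b_3\in\mathbb{F}_q$, let $\varepsilon$ be a primitive element of $\mathbb{F}_{q^2}$, let $d_1,d_2,d_3$ be odd integers and $t=(q+1)/2$. Let $i$ be a non-negative integer with $i<2m$, let $j$ be the integer with $0\leq j<m$ and $j\equiv i\pmod m$, and let $d=\gcd(m,j)$. Let $$P(x)=b_1\varepsilon^{td_1}(x^q+x+\delta)^{p^i+q}+b_2\varepsilon^{td_2}(x^q+x+\delta)^{p^i+1}+b_3\varepsilon^{td_3}(x^q+x+\delta)^{2p^i}-x,$$ and put $$A=(\delta^q-\delta)(b_1\varepsilon^{td_1}-b_2\varepsilon^{td_2})+2b_3\varepsilon^{td_3}(\delta^{p^i}-\delta^{p^iq}),$$ $$B=1+(\delta^{p^iq}-\delta^{p^i})(b_1\varepsilon^{td_1}+b_2\varepsilon^{td_2}),$$ $$C=(\delta^{p^i+q}-\delta^{p^iq+1})b_1\varepsilon^{td_1}+(\delta^{p^i+1}-\delta^{p^iq+q})b_2\varepsilon^{td_2}+(\delta^{2p^i}-\delta^{2p^iq})b_3\varepsilon^{td_3}.$$ For $y$ define $G(y)=b_1\varepsilon^{td_1}y^{p^i+q}+b_2\varepsilon^{td_2}y^{p^i+1}+b_3\varepsilon^{td_3}y^{2p^i}$. Then: (1) If $i\in\{0,m\}$, then $P$ permutes $\mathbb{F}_{q^2}$ if and only if $A-B\neq0$, and in that case $P^{-1}(x)=G\!\left((A-B)^{-1}(x^q+x)-(A-B)^{-1}C+\delta\right)-x$.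 (2) If $i\notin\{0,m\}$, $A=0$ and $B\neq0$, then $P$ permutes $\mathbb{F}_{q^2}$ and $P^{-1}(x)=G\!\left(-B^{-1}(x^q+x)+B^{-1}C+\delta\right)-x$. (3) If $i\notin\{0,m\}$, $A\neq0$ and $B=0$, then $P$ permutes $\mathbb{F}_{q^2}$ and $P^{-1}(x)=G\!\left(A^{-p^{m-j}}(x^q+x)^{p^{m-j}}-(C/A)^{p^{m-j}}+\delta\right)-x$. (4) If $i\notin\{0,m\}$ and $AB\neq0$, then $P$ permutes $\mathbb{F}_{q^2}$ if and only if $N_{p^m/p^d}(B/A)\neq1$, and in that case $$P^{-1}(x)=G\!\left(\delta+\frac{N_{p^m/p^d}(B/A)}{1-N_{p^m/p^d}(B/A)}\sum_{k=0}^{m/d-1}\left(\frac{A}{B}\right)^{\frac{p^{(k+1)j}-1}{p^j-1}}\left(\frac{x^q+x}{A}-\frac{C}{A}\right)^{p^{kj}}\right)-x.$$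
   Context: For $a\in\mathbb{F}_{p^m}$ and $d\mid m$, $N_{p^m/p^d}(a)=a^{(p^m-1)/(p^d-1)}$ is the norm to $\mathbb{F}_{p^d}$. The compositional inverse of a permutation polynomial $f$ of $\mathbb{F}_{Q}$ is the unique polynomial $f^{-1}$ (modulo $x^Q-x$) with $f(f^{-1}(c))=f^{-1}(f(c))=c$ for all $c\in\mathbb{F}_Q$. The auxiliary notation $G$ is only shorthand for writing out the three-term expression. *)

From HB Require Import structures.
From mathcomp Require Import all_boot all_order all_algebra all_field.
Set Implicit Arguments. Unset Strict Implicit. Unset Printing Implicit Defensive.
Import Order.TTheory GRing.Theory Num.Theory.
Local Open Scope ring_scope.

Definition normpd (F : finFieldType) (p m d : nat) (a : F) : F :=
  a ^+ ((p ^ m).-1 %/ (p ^ d).-1).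

Definition comp_inverse (F : finFieldType) (f g : F -> F) : Prop :=
  forall c : F, f (g c) = c /\ g (f c) = c.

From HB Require Import structures.
From mathcomp Require Import all_boot all_order all_algebra all_field.
From mathcomp Require Import ring zify.
Import Order.TTheory GRing.Theory Num.Theory.
Set Implicit Arguments. Unset Strict Implicit.
Local Open Scope ring_scope.

(* Write T x = x ^ q + x for the trace onto F_q.  Since e_k ^ q = - e_k, expanding G gives
   T (G (z + delta)) = L z + z for z in F_q, where L z = A z ^ (p ^ j) - B z + C; hence
   T o P = L o T, P permutes F_(q^2) iff L is injective on F_q, and then
   P^-1 x = G (L^-1 (T x) + delta) - x.  L is affine when j = 0 or A = 0 and a Frobenius
   twist when B = 0.  When A B != 0, L is not injective iff w ^ (p ^ j - 1) = B / A has a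
   solution w in F_q^*, which (F_q^* being cyclic and gcd (p^j - 1, p^m - 1) = p^d - 1)
   happens iff N (B / A) = 1; otherwise L^-1 is the telescoping sum of the statement. *)

Section PcharNatPower.
Variables (R : comNzRingType) (n : nat).
Hypothesis pcharRn : [pchar R].-nat n.

Lemma expr0n_pchar : (0 : R) ^+ n = 0.
Proof. by case/andP: pcharRn => n_gt0 _; rewrite expr0n eqn0Ngt n_gt0. Qed.

Lemma exprBn_pchar (x y : R) : (x - y) ^+ n = x ^+ n - y ^+ n.
Proof. by rewrite exprDn_pchar // exprNn_pchar. Qed.

Lemma expr_sum_pchar (I : Type) (r : seq I) (P : pred I) (f : I -> R) :
  (\sum_(i <- r | P i) f i) ^+ n = \sum_(i <- r | P i) f i ^+ n.
Proof. exact: (big_morph _ (fun x y => exprDn_pchar x y pcharRn) expr0n_pchar). Qed.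

Lemma natr_exp_pchar k : (k%:R : R) ^+ n = k%:R.
Proof.
elim: k => [|k IHk]; first exact: expr0n_pchar.
by rewrite -addn1 natrD exprDn_pchar // IHk expr1n.
Qed.

End PcharNatPower.

Lemma pchar_nat_expn (R : nzRingType) p k : p \in [pchar R] -> [pchar R].-nat (p ^ k)%N.
Proof.
move=> pcharRp; rewrite pnatX (eq_pnat _ (pcharf_eq pcharRp)).
by rewrite pnat_id ?(pcharf_prime pcharRp).
Qed.

Section FrobeniusFixedPoints.
Variables (R : pzSemiRingType) (p m : nat) (x : R).
Hypothesis x_fixed : x ^+ (p ^ m) = x.

Lemma fixed_expr_expnM k : x ^+ (p ^ (k * m)) = x.
Proof. by elim: k => [|k IHk]; rewrite ?expr1 // mulSn expnD exprM x_fixed. Qed.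

Lemma fixed_expr_expn_mod e : x ^+ (p ^ e) = x ^+ (p ^ (e %% m)).
Proof. by rewrite {1}(divn_eq e m) expnD exprM fixed_expr_expnM. Qed.

End FrobeniusFixedPoints.

Lemma fixed_expr_predn (R : idomainType) n (x : R) :
  x != 0 -> (0 < n)%N -> x ^+ n = x -> x ^+ n.-1 = 1.
Proof. by move=> x_neq0 n_gt0 xn; apply: (mulIf x_neq0); rewrite mul1r -exprSr prednK. Qed.

Lemma predn_exp_gt0 p a : (1 < p)%N -> (0 < a)%N -> (0 < (p ^ a).-1)%N.
Proof. by move=> p_gt1 a_gt0; rewrite -subn1 subn_gt0 -{1}(expn0 p) ltn_exp2l. Qed.

Lemma dvdn_predn_exp p a b : (a %| b)%N -> ((p ^ a).-1 %| (p ^ b).-1)%N.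
Proof.
by move=> /dvdnP[k ->]; rewrite mulnC expnM [X in (_ %| X)%N]predn_exp dvdn_mulr.
Qed.

Lemma predn_expM_div p j k : (1 < p)%N -> (0 < j)%N ->
  ((p ^ (k * j)).-1 %/ (p ^ j).-1 = \sum_(l < k) p ^ (l * j))%N.
Proof.
move=> p_gt1 j_gt0; rewrite mulnC expnM predn_exp mulKn ?predn_exp_gt0 //.
by apply: eq_bigr => l _; rewrite -expnM mulnC.
Qed.

Lemma sum_expnM_recl p j k :
  (\sum_(l < k.+1) p ^ (l * j) = 1 + p ^ j * \sum_(l < k) p ^ (l * j))%N.
Proof.
rewrite big_ord_recl mul0n expn0 big_distrr; congr (_ + _)%N.
by apply: eq_bigr => l _; rewrite /bump /= mulSn expnD.
Qed.

Lemma mul_modn_inj n a (n_gt0 : (0 < n)%N) : coprime n a ->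
  injective (fun k : 'I_n => Ordinal (ltn_pmod (k * a) n_gt0)).
Proof.
move=> co_na k1 k2 /(congr1 val) /= eq_mod; apply: val_inj => /=.
wlog le_k21 : k1 k2 eq_mod / (k2 <= k1)%N.
  by move=> wlog_k; case: (leqP k2 k1) => [|/ltnW] le; [|symmetry]; exact: wlog_k.
move/eqP: eq_mod; rewrite eqn_mod_dvd ?leq_mul2r ?le_k21 ?orbT //.
rewrite -mulnBl (Gauss_dvdl _ co_na) => /dvdn_leq.
by have := ltn_ord k1; lia.
Qed.

Section FrobeniusNorm.
Variables (F : fieldType) (p m j : nat).
Hypotheses (pcharFp : p \in [pchar F]) (m_gt0 : (0 < m)%N) (j_gt0 : (0 < j)%N).
Local Notation norm b := (b ^+ ((p ^ m).-1 %/ (p ^ gcdn m j).-1)).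

Let p_gt1 : (1 < p)%N. Proof. exact: prime_gt1 (pcharf_prime pcharFp). Qed.
Let pm_gt0 : (0 < p ^ m)%N. Proof. by rewrite expn_gt0 ltnW. Qed.
Let d_gt0 : (0 < gcdn m j)%N. Proof. by rewrite gcdn_gt0 m_gt0. Qed.
Let pd_gt0 : (0 < p ^ gcdn m j)%N. Proof. by rewrite expn_gt0 ltnW. Qed.

Lemma norm_expr_sum (b : F) : b ^+ (p ^ m) = b ->
  b ^+ (\sum_(k < m %/ gcdn m j) p ^ (k * j)) = norm b.
Proof.
move=> b_fixed; set d := gcdn m j; set n := (m %/ d)%N.
have m_eq : m = (n * d)%N by rewrite divnK // dvdn_gcdl.
have j_eq : j = (j %/ d * d)%N by rewrite divnK // dvdn_gcdr.
have n_gt0 : (0 < n)%N by move: m_gt0; rewrite m_eq muln_gt0 => /andP[].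
have co_nj : coprime n (j %/ d).
  by rewrite /coprime -(eqn_pmul2r d_gt0) mul1n muln_gcdl -m_eq -j_eq.
rewrite [in RHS]m_eq predn_expM_div // !expr_sum.
rewrite [RHS](reindex_inj (@mul_modn_inj _ _ n_gt0 co_nj)).
apply: eq_bigr => k _ /=.
by rewrite (fixed_expr_expn_mod b_fixed (k * j)) muln_modl // -mulnA -j_eq -m_eq.
Qed.

Lemma eigen_norm1 (w b : F) :
  w != 0 -> w ^+ (p ^ m) = w -> w ^+ (p ^ j) = b * w -> norm b = 1.
Proof.
move=> w_neq0 w_fixed w_eigen.
have b_eq : b = w ^+ (p ^ j).-1.
  by apply: (mulIf w_neq0); rewrite -w_eigen -exprSr prednK // expn_gt0 ltnW.
have w_unit : w ^+ (p ^ m).-1 = 1 by exact: fixed_expr_predn.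
rewrite b_eq; have [a ->] := dvdnP (dvdn_predn_exp p (dvdn_gcdr m j)).
have [c c_eq] := dvdnP (dvdn_predn_exp p (dvdn_gcdl m j)).
rewrite c_eq in w_unit *; rewrite mulnK ?predn_exp_gt0 //.
by rewrite -exprM -mulnA [(_ * c)%N]mulnC mulnC exprM w_unit expr1n.
Qed.

Lemma norm1_root (g b : F) : ((p ^ m).-1).-primitive_root g ->
  b != 0 -> b ^+ (p ^ m) = b -> norm b = 1 ->
  exists2 v, v ^+ (p ^ m) = v & v ^+ (p ^ gcdn m j).-1 = b.
Proof.
move=> g_prim b_neq0 b_fixed norm_b1.
have [c c_eq] := dvdnP (dvdn_predn_exp p (dvdn_gcdl m j)).
have c_gt0 : (0 < c)%N.
  by move: (predn_exp_gt0 p_gt1 m_gt0); rewrite c_eq muln_gt0 => /andP[].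
have [[i _] /= b_eq] := prim_rootP g_prim (fixed_expr_predn b_neq0 pm_gt0 b_fixed).
have /dvdnP[k i_eq] : ((p ^ gcdn m j).-1 %| i)%N.
  have : ((p ^ m).-1 %| i * c)%N.
    by rewrite (prim_order_dvd g_prim) exprM -b_eq -norm_b1 c_eq mulnK ?predn_exp_gt0.
  by rewrite c_eq (mulnC i) dvdn_pmul2l.
exists (g ^+ k); last by rewrite -exprM -i_eq b_eq.
rewrite -(prednK pm_gt0) exprS -exprM [(k * _)%N]mulnC exprM.
by rewrite (prim_expr_order g_prim) expr1n mulr1.
Qed.

Lemma root_eigen (v : F) : v != 0 -> v ^+ (p ^ m) = v ->
  exists w : F, [/\ w != 0, w ^+ (p ^ m) = w & w ^+ (p ^ j) = v ^+ (p ^ gcdn m j).-1 * w].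
Proof.
move=> v_neq0 v_fixed.
have [km kn bezout _] := egcdnP m j_gt0; rewrite gcdnC in bezout.
set S := (\sum_(l < km) p ^ (l * j))%N.
exists (v ^+ S); split; first exact: expf_neq0.
  by rewrite exprAC v_fixed.
(* Bezout: km j = kn m + d, so S p^j + 1 = S + p^(km j) and v^(p^(km j)) = v^(p^d). *)
apply: (mulIf v_neq0).
have sum_eq : (S * p ^ j + 1 = S + p ^ (km * j))%N.
  by rewrite mulnC addnC -sum_expnM_recl big_ord_recr.
rewrite -exprM -exprSr -addn1 sum_eq exprD bezout expnD exprM fixed_expr_expnM //.
by rewrite -{1}(prednK pd_gt0) exprSr; ring.
Qed.

Lemma norm1_eigen (g b : F) : ((p ^ m).-1).-primitive_root g ->
  b != 0 -> b ^+ (p ^ m) = b -> norm b = 1 ->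
  exists w : F, [/\ w != 0, w ^+ (p ^ m) = w & w ^+ (p ^ j) = b * w].
Proof.
move=> g_prim b_neq0 b_fixed norm_b1.
have [v v_fixed v_root] := norm1_root g_prim b_neq0 b_fixed norm_b1.
have v_neq0 : v != 0.
  by apply: contraNneq b_neq0 => v0; rewrite -v_root v0 expr0n eqn0Ngt predn_exp_gt0.
by rewrite -v_root; exact: root_eigen.
Qed.

Lemma norm_frobenius_fixed (b : F) : b != 0 -> b ^+ (p ^ m) = b ->
  norm b ^+ (p ^ gcdn m j) = norm b.
Proof.
move=> b_neq0 b_fixed.
have N_unit : norm b ^+ (p ^ gcdn m j).-1 = 1.
  by rewrite -exprM divnK ?dvdn_predn_exp ?dvdn_gcdl ?fixed_expr_predn.
by set N := norm b; rewrite -(prednK pd_gt0) exprSr N_unit mul1r.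
Qed.

Lemma frobenius_telescope (f : nat -> F) (b : F) n :
  (forall k, f k ^+ (p ^ j) = b * f k.+1) ->
  (\sum_(k < n) f k) ^+ (p ^ j) - b * \sum_(k < n) f k = b * (f n - f 0%N).
Proof.
move=> f_frob; rewrite expr_sum_pchar ?pchar_nat_expn //.
under eq_bigr do rewrite f_frob.
rewrite -mulr_sumr -mulrBr -sumrB.
by rewrite -(big_mkord xpredT (fun k => f k.+1 - f k)) telescope_sumr.
Qed.

Lemma frobenius_affine_solution (b u : F) :
  b != 0 -> b ^+ (p ^ m) = b -> u ^+ (p ^ m) = u -> norm b != 1 ->
  let z := norm b / (1 - norm b) * \sum_(k < m %/ gcdn m j)
             b^-1 ^+ ((p ^ (k.+1 * j)).-1 %/ (p ^ j).-1) * u ^+ (p ^ (k * j)) in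
  z ^+ (p ^ j) - b * z = u.
Proof.
move=> b_neq0 b_fixed u_fixed norm_b1 z.
set N := norm b; set n := (m %/ gcdn m j)%N.
pose f k := b^-1 ^+ (\sum_(l < k.+1) p ^ (l * j)) * u ^+ (p ^ (k * j)).
have N_neq0 : N != 0 by rewrite expf_neq0.
have N_fixed : N ^+ (p ^ j) = N.
  by rewrite -(divnK (dvdn_gcdr m j)) fixed_expr_expnM ?norm_frobenius_fixed.
have f_frob k : f k ^+ (p ^ j) = b * f k.+1.
  rewrite /f exprMn -!exprM [in RHS]sum_expnM_recl exprD expr1 !mulrA mulfV // mul1r.
  congr (_ ^+ _ * _ ^+ _); first exact: mulnC.
  by rewrite -expnD addnC -mulSn.
have fn : b * f n = N^-1 * u.
  rewrite /f sum_expnM_recl exprD expr1 !mulrA mulfV // mul1r mulnC exprM.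
  rewrite exprVn norm_expr_sum // exprVn N_fixed (fixed_expr_expn_mod u_fixed).
  by rewrite /n mulnC gcdnC muln_divCA_gcd modnMr expn0 expr1.
have z_eq : z = N / (1 - N) * \sum_(k < n) f k.
  by congr (_ * _); apply: eq_bigr => k _; rewrite predn_expM_div.
have c_fixed : (N / (1 - N)) ^+ (p ^ j) = N / (1 - N).
  by rewrite exprMn exprVn exprBn_pchar ?pchar_nat_expn // N_fixed expr1n.
have f0 : f 0%N = b^-1 * u by rewrite /f big_ord1 mul0n expn0 !expr1.
(* f k ^+ p^j = b * f k.+1, so z ^+ p^j - b z telescopes to (N / (1 - N)) b (f n - f 0). *)
rewrite z_eq exprMn c_fixed mulrCA -mulrBr frobenius_telescope // mulrBr fn f0.
by field; rewrite b_neq0 N_neq0 subr_eq0 eq_sym norm_b1.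
Qed.

Lemma linearized_solution (A B C w : F) :
  A != 0 -> B != 0 -> A ^+ (p ^ m) = A -> B ^+ (p ^ m) = B ->
  C ^+ (p ^ m) = C -> w ^+ (p ^ m) = w -> norm (B / A) != 1 ->
  let z := norm (B / A) / (1 - norm (B / A)) * \sum_(k < m %/ gcdn m j)
             (A / B) ^+ ((p ^ (k.+1 * j)).-1 %/ (p ^ j).-1)
             * (w / A - C / A) ^+ (p ^ (k * j)) in
  A * z ^+ (p ^ j) - B * z + C = w.
Proof.
move=> A_neq0 B_neq0 A_fixed B_fixed C_fixed w_fixed norm_BA1 z.
have BA_neq0 : B / A != 0 by rewrite mulf_neq0 ?invr_eq0.
have BA_fixed : (B / A) ^+ (p ^ m) = B / A by rewrite exprMn exprVn A_fixed B_fixed.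
have u_fixed : (w / A - C / A) ^+ (p ^ m) = w / A - C / A.
  by rewrite exprBn_pchar ?pchar_nat_expn // !exprMn exprVn A_fixed C_fixed w_fixed.
have := frobenius_affine_solution BA_neq0 BA_fixed u_fixed norm_BA1.
rewrite invf_div /= -/z => z_sol.
have -> : A * z ^+ (p ^ j) - B * z + C = A * (z ^+ (p ^ j) - B / A * z) + C by field.
by rewrite z_sol; field.
Qed.

End FrobeniusNorm.

Lemma comp_inverse_bij (F : finFieldType) (f g : F -> F) : comp_inverse f g -> bijective f.
Proof. by move=> fg; exists g => x; have [] := fg x. Qed.

Lemma eq_comp_inverse (F : finFieldType) (f g g' : F -> F) :
  g =1 g' -> comp_inverse f g -> comp_inverse f g'.
Proof. by move=> eq_g fg c; rewrite -!eq_g; exact: fg. Qed.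

Section TraceReduction.
Variables (F : finFieldType) (q : nat).
Hypotheses (pcharFq : [pchar F].-nat q) (frobK : forall x : F, x ^+ q ^+ q = x).
Local Notation Fq := [pred z : F | z ^+ q == z].
Variables (G L : F -> F) (delta : F).
Hypothesis trace_G : {in Fq, forall z, G (z + delta) ^+ q + G (z + delta) = L z + z}.
Local Notation P := (fun x => G (x ^+ q + x + delta) - x).

Lemma trace_in_Fq x : x ^+ q + x \in Fq.
Proof. by rewrite inE exprDn_pchar // frobK addrC. Qed.

Lemma trace_G_subr z c : z \in Fq ->
  (G (z + delta) - c) ^+ q + (G (z + delta) - c) = L z + z - (c ^+ q + c).
Proof. by move=> /trace_G trGz; rewrite exprBn_pchar // -trGz; ring. Qed.

Lemma trace_comp x :
  (G (x ^+ q + x + delta) - x) ^+ q + (G (x ^+ q + x + delta) - x) = L (x ^+ q + x).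
Proof. by rewrite trace_G_subr ?trace_in_Fq // addrK. Qed.

Lemma comp_inverse_trace (M : F -> F) :
  {in Fq, forall w, M w \in Fq} -> {in Fq, cancel M L} -> {in Fq &, injective L} ->
  comp_inverse P (fun x => G (M (x ^+ q + x) + delta) - x).
Proof.
move=> M_Fq LK L_inj c; split=> /=.
  rewrite trace_G_subr ?M_Fq ?trace_in_Fq // LK ?trace_in_Fq // [_ + M _]addrC addrK.
  by ring.
have L_Fq : L (c ^+ q + c) \in Fq by rewrite -trace_comp trace_in_Fq.
rewrite trace_comp (L_inj _ _ (M_Fq _ L_Fq) (trace_in_Fq c) (LK _ L_Fq)).
by ring.
Qed.

Lemma trace_injective (h : F) : h ^+ q + h = 1 -> injective P -> {in Fq &, injective L}.
Proof.
move=> trace_h P_inj z1 z2 z1_Fq z2_Fq eq_L.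
(* x1 and x2 have traces z1 and z2 but the same image under P. *)
pose x1 := h * z1; pose x2 := x1 + G (z2 + delta) - G (z1 + delta).
have trace_x1 : x1 ^+ q + x1 = z1.
  by rewrite exprMn (eqP z1_Fq) -mulrDl trace_h mul1r.
have trace_x2 : x2 ^+ q + x2 = z2.
  rewrite exprBn_pchar // exprDn_pchar //.
  transitivity ((x1 ^+ q + x1) + (G (z2 + delta) ^+ q + G (z2 + delta))
                - (G (z1 + delta) ^+ q + G (z1 + delta))); first by rewrite /x2; ring.
  by rewrite trace_x1 (trace_G z1_Fq) (trace_G z2_Fq) eq_L; ring.
have x12 : x1 = x2 by apply: P_inj; rewrite /= trace_x1 trace_x2 /x2; ring.
by rewrite -trace_x1 -trace_x2 x12.
Qed.

End TraceReduction.

Section LinearizedTrace.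
Variables (F : finFieldType) (p m : nat).
Hypotheses (pcharFp : p \in [pchar F]) (p_odd : odd p) (m_gt0 : (0 < m)%N).
Hypothesis cardF : #|F| = ((p ^ m) ^ 2)%N.
Local Notation q := (p ^ m)%N.
Local Notation Fq := [pred z : F | z ^+ q == z].
Variables (G : F -> F) (delta A B C : F) (j : nat).
Hypotheses (A_fixed : A ^+ q = A) (B_fixed : B ^+ q = B) (C_fixed : C ^+ q = C).
Hypothesis trace_G :
  {in Fq, forall z, G (z + delta) ^+ q + G (z + delta) = A * z ^+ (p ^ j) - B * z + C + z}.
Local Notation L := (fun z => A * z ^+ (p ^ j) - B * z + C).
Local Notation P := (fun x => G (x ^+ q + x + delta) - x).

Let pcharFq : [pchar F].-nat q. Proof. exact: pchar_nat_expn. Qed.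
Let pcharFpj : [pchar F].-nat (p ^ j)%N. Proof. exact: pchar_nat_expn. Qed.

Let frobK (x : F) : x ^+ q ^+ q = x.
Proof. by rewrite -exprM mulnn -cardF expf_card. Qed.

Let trace_half : (2%:R^-1 : F) ^+ q + 2%:R^-1 = 1.
Proof.
have two_neq0 : (2%:R : F) != 0.
  rewrite -(dvdn_pcharf pcharFp) dvdn_prime2 ?(pcharf_prime pcharFp) //.
  by apply: contraTneq p_odd => ->.
by rewrite exprVn natr_exp_pchar //; field.
Qed.

Let L_inj_bij : bijective P -> {in Fq &, injective L}.
Proof. by move/bij_inj; apply: (trace_injective pcharFq (L := L) trace_G trace_half). Qed.

Lemma trace_perm_affine (a c : F) : a ^+ q = a -> c ^+ q = c ->
  {in Fq, forall z, A * z ^+ (p ^ j) - B * z + C = a * z + c} ->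
  (bijective P <-> a != 0) /\
  (a != 0 -> comp_inverse P (fun x => G (a^-1 * (x ^+ q + x) - a^-1 * c + delta) - x)).
Proof.
move=> a_fixed c_fixed L_affine.
have P_inv : a != 0 ->
    comp_inverse P (fun x => G (a^-1 * (x ^+ q + x) - a^-1 * c + delta) - x).
  move=> a_neq0; pose M w := a^-1 * w - a^-1 * c.
  have M_Fq : {in Fq, forall w, M w \in Fq}.
    move=> w /eqP w_fixed.
    by rewrite inE /M exprBn_pchar // !exprMn exprVn a_fixed c_fixed w_fixed.
  apply: (comp_inverse_trace (L := L) pcharFq frobK trace_G M_Fq).
  - by move=> w w_Fq /=; rewrite L_affine ?M_Fq // /M; field.
  - by move=> z1 z2 z1_Fq z2_Fq /=; rewrite !L_affine // => /addIr /(mulfI a_neq0).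
split=> //; split=> [/L_inj_bij L_inj | /P_inv/comp_inverse_bij //].
have Fq0 : (0 : F) \in Fq by rewrite inE expr0n_pchar.
have Fq1 : (1 : F) \in Fq by rewrite inE expr1n.
apply: contra_neq (@oner_neq0 F) => a0.
by apply: L_inj => //=; rewrite !L_affine // a0 !mul0r.
Qed.

Lemma trace_perm_j0 : j = 0%N ->
  (bijective P <-> A - B != 0) /\
  (A - B != 0 ->
     comp_inverse P (fun x => G ((A - B)^-1 * (x ^+ q + x) - (A - B)^-1 * C + delta) - x)).
Proof.
move=> j0; apply: trace_perm_affine C_fixed _ => [|z _].
  by rewrite exprBn_pchar // A_fixed B_fixed.
by rewrite j0 expr1; ring.
Qed.

Lemma trace_perm_A0 : A = 0 -> B != 0 ->
  bijective P /\ comp_inverse P (fun x => G (- B^-1 * (x ^+ q + x) + B^-1 * C + delta) - x).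
Proof.
move=> A0 B_neq0; have NB_fixed : (- B) ^+ q = - B by rewrite exprNn_pchar // B_fixed.
have L_affine : {in Fq, forall z, A * z ^+ (p ^ j) - B * z + C = - B * z + C}.
  by move=> z _; rewrite A0; ring.
have [[_ P_bij] P_inv] := trace_perm_affine NB_fixed C_fixed L_affine.
rewrite oppr_eq0 in P_bij P_inv; split; first exact: P_bij.
by apply: eq_comp_inverse (P_inv B_neq0) => x; rewrite invrN [- B^-1 * C]mulNr opprK.
Qed.

Lemma trace_perm_B0 : (j <= m)%N -> A != 0 -> B = 0 ->
  bijective P /\
  comp_inverse P (fun x => G ((A^-1) ^+ (p ^ (m - j)) * (x ^+ q + x) ^+ (p ^ (m - j))
                              - (C / A) ^+ (p ^ (m - j)) + delta) - x).
Proof.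
move=> le_jm A_neq0 B0.
pose M w := A^-1 ^+ (p ^ (m - j)) * w ^+ (p ^ (m - j)) - (C / A) ^+ (p ^ (m - j)).
have pcharFpmj : [pchar F].-nat (p ^ (m - j))%N by exact: pchar_nat_expn.
have M_frob w : w ^+ q = w -> M w ^+ (p ^ j) = A^-1 * w - C / A.
  move=> w_fixed; rewrite exprBn_pchar // !exprMn -!exprM -expnD subnK //.
  by rewrite exprVn A_fixed w_fixed C_fixed.
have P_inv : comp_inverse P (fun x => G (M (x ^+ q + x) + delta) - x).
  apply: (comp_inverse_trace (L := L) pcharFq frobK trace_G (M := M)).
  - move=> w /eqP w_fixed; rewrite inE exprBn_pchar // !exprMn !(exprAC _ _ q).
    by rewrite exprVn A_fixed w_fixed C_fixed /M exprMn.
  - by move=> w /eqP w_fixed /=; rewrite M_frob // B0; field.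
  - move=> z1 z2 _ _ /=; rewrite B0 !mul0r !subr0 => /addIr /(mulfI A_neq0) /eqP.
    by rewrite -subr_eq0 -exprBn_pchar // expf_eq0 subr_eq0 => /andP[_ /eqP].
by split; [exact: comp_inverse_bij P_inv | exact: P_inv].
Qed.

Section NormCase.
Hypotheses (j_gt0 : (0 < j)%N) (A_neq0 : A != 0) (B_neq0 : B != 0).
Local Notation N := (normpd p m (gcdn m j) (B / A)).

Let BA_neq0 : B / A != 0. Proof. by rewrite mulf_neq0 ?invr_eq0. Qed.
Let BA_fixed : (B / A) ^+ q = B / A. Proof. by rewrite exprMn exprVn A_fixed B_fixed. Qed.

Lemma trace_injective_norm : N != 1 -> {in Fq &, injective L}.
Proof.
move=> N1 z1 z2 /eqP z1_fixed /eqP z2_fixed /= /eqP; rewrite -subr_eq0 => /eqP eq_L.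
apply/eqP; rewrite -subr_eq0; apply: contraNT N1 => w_neq0; apply/eqP.
apply: (eigen_norm1 pcharFp m_gt0 w_neq0).
  by rewrite exprBn_pchar // z1_fixed z2_fixed.
rewrite exprBn_pchar //; apply: (mulfI A_neq0); apply/eqP.
by rewrite -subr_eq0 -eq_L; apply/eqP; field.
Qed.

Lemma trace_inverse_norm : N != 1 ->
  comp_inverse P (fun x => G (delta + N / (1 - N) *
    \sum_(k < m %/ gcdn m j) (A / B) ^+ ((p ^ (k.+1 * j)).-1 %/ (p ^ j).-1)
      * ((x ^+ q + x) / A - C / A) ^+ (p ^ (k * j))) - x).
Proof.
move=> N1; pose M w := N / (1 - N) *
  \sum_(k < m %/ gcdn m j) (A / B) ^+ ((p ^ (k.+1 * j)).-1 %/ (p ^ j).-1)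
    * (w / A - C / A) ^+ (p ^ (k * j)).
have AB_fixed : (A / B) ^+ q = A / B by rewrite exprMn exprVn A_fixed B_fixed.
have N_fixed : N ^+ q = N by rewrite /normpd exprAC BA_fixed.
apply: (eq_comp_inverse (g := fun x => G (M (x ^+ q + x) + delta) - x)).
  by move=> x; rewrite (addrC (M _)).
apply: (comp_inverse_trace (L := L) pcharFq frobK trace_G (M := M)).
- move=> w /eqP w_fixed; rewrite inE /M exprMn exprMn exprVn exprBn_pchar //.
  rewrite expr1n N_fixed expr_sum_pchar //; apply/eqP; congr (_ * _).
  apply: eq_bigr => k _; rewrite exprMn !(exprAC _ _ q) AB_fixed.
  by rewrite exprBn_pchar // !exprMn !exprVn A_fixed w_fixed C_fixed.
- by move=> w /eqP w_fixed; exact: linearized_solution.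
- exact: trace_injective_norm.
Qed.

Lemma trace_not_bij_norm1 (eps : F) :
  (#|F|.-1).-primitive_root eps -> N = 1 -> ~ bijective P.
Proof.
move=> eps_prim N1 /L_inj_bij L_inj.
have g_prim : ((p ^ m).-1).-primitive_root (eps ^+ (#|F|.-1 %/ (p ^ m).-1)).
  apply: dvdn_prim_root => //; rewrite cardF -expnM.
  by apply: dvdn_predn_exp; apply: dvdn_mulr.
have [w [w_neq0 w_fixed w_eigen]] :=
  norm1_eigen pcharFp m_gt0 j_gt0 g_prim BA_neq0 BA_fixed N1.
apply/negP: w_neq0; apply/negPn/eqP; apply: L_inj; rewrite ?inE ?w_fixed //=.
  by rewrite expr0n_pchar.
by rewrite w_eigen expr0n_pchar //; field.
Qed.

End NormCase.

Lemma trace_perm_AB (eps : F) :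
  (#|F|.-1).-primitive_root eps -> (0 < j)%N -> A * B != 0 ->
  let N := normpd p m (gcdn m j) (B / A) in
  (bijective P <-> N != 1) /\
  (N != 1 -> comp_inverse P (fun x => G (delta + N / (1 - N) *
      \sum_(k < m %/ gcdn m j) (A / B) ^+ ((p ^ (k.+1 * j)).-1 %/ (p ^ j).-1)
        * ((x ^+ q + x) / A - C / A) ^+ (p ^ (k * j))) - x)).
Proof.
move=> eps_prim j_gt0; rewrite mulf_eq0 negb_or => /andP[A_neq0 B_neq0] N.
have P_inv := trace_inverse_norm j_gt0 A_neq0 B_neq0.
split=> //; split=> [P_bij | /P_inv/comp_inverse_bij //].
by apply/eqP => N1; exact: trace_not_bij_norm1 eps_prim N1 P_bij.
Qed.

End LinearizedTrace.

Lemma prim_expr_half (R : idomainType) n (z : R) : (n.*2).-primitive_root z -> z ^+ n = -1.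
Proof.
move=> z_prim; have n_gt0 : (0 < n)%N by rewrite -double_gt0 (prim_order_gt0 z_prim).
have lt_n_2n : (n < n.*2)%N by rewrite -addnn -{1}[n]addn0 ltn_add2l.
have /eqP := prim_expr_order z_prim; rewrite -addnn exprD -expr2 sqrf_eq1.
by rewrite -(prim_order_dvd z_prim) gtnNdvd //= => /eqP.
Qed.

Lemma exprz_odd_anti (R : comUnitRingType) q (x : R) (d : int) :
  x ^+ q = - x -> odd `|d|%N -> (x ^ d) ^+ q = - x ^ d.
Proof.
move=> x_anti; have x_odd_anti n : odd n -> (x ^+ n) ^+ q = - x ^+ n.
  by move=> n_odd; rewrite exprAC x_anti exprNn -signr_odd n_odd mulN1r.
case: d => n /= n_odd; first exact: x_odd_anti.
by rewrite exprVn x_odd_anti // invrN.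
Qed.

Lemma twist_coef_anti (F : fieldType) (q : nat) (eps b : F) (d : int) :
  odd q -> ((q ^ 2).-1).-primitive_root eps -> b ^+ q = b -> odd `|d|%N ->
  (b * eps ^ (((q + 1) %/ 2)%:Z * d)) ^+ q = - (b * eps ^ (((q + 1) %/ 2)%:Z * d)).
Proof.
move=> q_odd eps_prim b_fixed d_odd.
set t := ((q + 1) %/ 2)%N.
have [k q_eq] : exists k, q = k.*2.+1.
  by exists q./2; rewrite -[LHS]odd_double_half q_odd.
have t_eq : t = k.+1 by rewrite /t q_eq; lia.
have half : ((q ^ 2).-1 = (t * k.*2).*2)%N by rewrite t_eq q_eq; lia.
(* eps ^+ (t * q) = eps ^+ t * eps ^+ ((q ^ 2).-1./2) and the last factor is -1. *)
have eps_t : (eps ^+ t) ^+ q = - eps ^+ t.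
  rewrite half in eps_prim.
  by rewrite -exprM q_eq mulnS exprD (prim_expr_half eps_prim) mulrN1.
by rewrite -exprz_exp exprMn b_fixed exprz_odd_anti // mulrN.
Qed.

Section TwistedQuadratic.
Variables (F : fieldType) (q pi : nat).
Hypotheses (pcharFq : [pchar F].-nat q) (pcharFpi : [pchar F].-nat pi).
Hypothesis frobK : forall x : F, x ^+ q ^+ q = x.
Variables (e1 e2 e3 delta : F).
Hypotheses (e1_anti : e1 ^+ q = - e1) (e2_anti : e2 ^+ q = - e2) (e3_anti : e3 ^+ q = - e3).

Local Notation G y := (e1 * y ^+ (pi + q) + e2 * y ^+ (pi + 1) + e3 * y ^+ (2 * pi)).
Local Notation A := ((delta ^+ q - delta) * (e1 - e2)
                     + 2%:R * e3 * (delta ^+ pi - delta ^+ (pi * q))).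
Local Notation B := (1 + (delta ^+ (pi * q) - delta ^+ pi) * (e1 + e2)).
Local Notation C := ((delta ^+ (pi + q) - delta ^+ (pi * q + 1)) * e1
                     + (delta ^+ (pi + 1) - delta ^+ (pi * q + q)) * e2
                     + (delta ^+ (2 * pi) - delta ^+ (2 * pi * q)) * e3).

Let expr_piq (x : F) : x ^+ (pi * q) = x ^+ q ^+ pi.
Proof. by rewrite mulnC exprM. Qed.

Let expr_2pi (x : F) : x ^+ (2 * pi) = x ^+ pi ^+ 2.
Proof. by rewrite mulnC exprM. Qed.

Let expr_2piq (x : F) : x ^+ (2 * pi * q) = x ^+ q ^+ pi ^+ 2.
Proof. by rewrite -mulnA mulnC exprM expr_piq. Qed.

Lemma trace_twisted z : z ^+ q = z ->
  G (z + delta) ^+ q + G (z + delta) = A * z ^+ pi - B * z + C + z.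
Proof.
move=> z_fixed; rewrite expr_2piq !expr_2pi !exprD !expr1 !expr_piq.
have y_q : (z + delta) ^+ q = z + delta ^+ q by rewrite exprDn_pchar // z_fixed.
have y_pi : (z + delta) ^+ pi = z ^+ pi + delta ^+ pi by rewrite exprDn_pchar.
have y_pi_q : (z + delta) ^+ pi ^+ q = z ^+ pi + delta ^+ q ^+ pi.
  by rewrite exprAC y_q exprDn_pchar.
rewrite 2!(exprDn_pchar _ _ pcharFq) !exprMn e1_anti e2_anti e3_anti.
by rewrite y_pi_q frobK y_q y_pi; ring.
Qed.
Lemma twisted_coefs_fixed : [/\ A ^+ q = A, B ^+ q = B & C ^+ q = C].
Proof.
have delta_pi_q : delta ^+ pi ^+ q = delta ^+ q ^+ pi by rewrite exprAC.
have delta_q_pi_q : delta ^+ q ^+ pi ^+ q = delta ^+ pi by rewrite exprAC frobK.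
rewrite expr_2piq !expr_2pi !exprD !expr1 !expr_piq.
split; rewrite !(exprDn_pchar _ _ pcharFq, exprNn_pchar _ pcharFq, exprMn);
  by rewrite ?e1_anti ?e2_anti ?e3_anti ?frobK ?delta_pi_q ?delta_q_pi_q ?expr1n; ring.
Qed.

End TwistedQuadratic.

Lemma modn_eq0_lt_double i m : (0 < m)%N -> (i < 2 * m)%N ->
  (i %% m == 0)%N = (i == 0%N) || (i == m).
Proof.
move=> m_gt0 lt_i2m; have [lt_im | le_mi] := ltnP i m.
  by rewrite modn_small // (ltn_eqF lt_im) orbF.
by rewrite -(subnK le_mi) modnDr modn_small; lia.
Qed.

Unset Implicit Arguments.

Theorem theorem3p15 (F : finFieldType) (p m : nat)
  (hp : prime p) (hodd : odd p) (hm : (0 < m)%N)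
  (hF : #|F| = ((p ^ m) ^ 2)%N)
  (delta b1 b2 b3 eps : F) (d1 d2 d3 : int) (i : nat)
  (hb1 : b1 ^+ (p ^ m) = b1) (hb2 : b2 ^+ (p ^ m) = b2) (hb3 : b3 ^+ (p ^ m) = b3)
  (heps : (#|F|.-1).-primitive_root eps)
  (hd1 : odd `|d1|%N) (hd2 : odd `|d2|%N) (hd3 : odd `|d3|%N)
  (hi : (i < 2 * m)%N) :
  let q := (p ^ m)%N in
  let t := ((q + 1) %/ 2)%N in
  let j := (i %% m)%N in
  let d := gcdn m j in
  let pi := (p ^ i)%N in
  let e1 := b1 * eps ^ ((t%:Z) * d1) in
  let e2 := b2 * eps ^ ((t%:Z) * d2) in
  let e3 := b3 * eps ^ ((t%:Z) * d3) in
  let G := fun y : F => e1 * y ^+ (pi + q) + e2 * y ^+ (pi + 1) + e3 * y ^+ (2 * pi) in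
  let P := fun x : F => G (x ^+ q + x + delta) - x in
  let A := (delta ^+ q - delta) * (e1 - e2)
           + 2%:R * e3 * (delta ^+ pi - delta ^+ (pi * q)) in
  let B := 1 + (delta ^+ (pi * q) - delta ^+ pi) * (e1 + e2) in
  let C := (delta ^+ (pi + q) - delta ^+ (pi * q + 1)) * e1
           + (delta ^+ (pi + 1) - delta ^+ (pi * q + q)) * e2
           + (delta ^+ (2 * pi) - delta ^+ (2 * pi * q)) * e3 in
  let inZ := (i == 0%N) || (i == m) in
  (* (1) *)
  (inZ ->
     (bijective P <-> A - B != 0) /\
     (A - B != 0 ->
        comp_inverse P (fun x => G ((A - B)^-1 * (x ^+ q + x) - (A - B)^-1 * C + delta) - x)))
  /\
  (* (2) *)
  (~~ inZ -> A = 0 -> B != 0 ->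
     bijective P /\
     comp_inverse P (fun x => G (- B^-1 * (x ^+ q + x) + B^-1 * C + delta) - x))
  /\
  (* (3) *)
  (~~ inZ -> A != 0 -> B = 0 ->
     bijective P /\
     comp_inverse P (fun x => G ((A^-1) ^+ (p ^ (m - j)) * (x ^+ q + x) ^+ (p ^ (m - j))
                                 - (C / A) ^+ (p ^ (m - j)) + delta) - x))
  /\
  (* (4) *)
  (~~ inZ -> A * B != 0 ->
     let N := normpd p m d (B / A) in
     (bijective P <-> N != 1) /\
     (N != 1 ->
        comp_inverse P (fun x => G (delta + N / (1 - N) *
           \sum_(k < m %/ d) (A / B) ^+ ((p ^ ((k.+1) * j)).-1 %/ (p ^ j).-1)
                              * ((x ^+ q + x) / A - C / A) ^+ (p ^ (k * j))) - x))).
Proof.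
move=> q t j d pi e1 e2 e3 G P A B C inZ.
have pcharFp : p \in [pchar F].
  by apply: (card_finPcharP (n := (m * 2)%N)); rewrite // hF expnM.
have pcharFq := pchar_nat_expn m pcharFp.
have frobK (x : F) : x ^+ q ^+ q = x by rewrite -exprM mulnn -hF expf_card.
have eps_prim : ((q ^ 2).-1).-primitive_root eps by rewrite -hF.
have q_odd : odd q by rewrite oddX hodd orbT.
have [e1_anti e2_anti e3_anti] : [/\ e1 ^+ q = - e1, e2 ^+ q = - e2 & e3 ^+ q = - e3].
  by split; apply: twist_coef_anti.
have [A_fixed B_fixed C_fixed] : [/\ A ^+ q = A, B ^+ q = B & C ^+ q = C].
  exact (twisted_coefs_fixed pi pcharFq frobK delta e1_anti e2_anti e3_anti).
have trace_G : {in [pred z | z ^+ q == z], forall z,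
    G (z + delta) ^+ q + G (z + delta) = A * z ^+ (p ^ j) - B * z + C + z}.
  move=> z /eqP z_fixed; rewrite /j -(fixed_expr_expn_mod z_fixed).
  exact: (trace_twisted pcharFq (pchar_nat_expn i pcharFp) frobK delta
           e1_anti e2_anti e3_anti z_fixed).
have inZ_j0 : inZ = (j == 0%N) by rewrite /j modn_eq0_lt_double.
split; [|split; [|split]].
- rewrite inZ_j0 => /eqP.
  exact: (trace_perm_j0 pcharFp hodd hF A_fixed B_fixed C_fixed trace_G).
- move=> _; exact: (trace_perm_A0 pcharFp hodd hF B_fixed C_fixed trace_G).
- rewrite inZ_j0 => _.
  exact: (trace_perm_B0 pcharFp hF A_fixed C_fixed trace_G (ltnW (ltn_pmod i hm))).
- rewrite inZ_j0 -lt0n => j_gt0.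
  exact: (trace_perm_AB pcharFp hodd hm hF A_fixed B_fixed C_fixed trace_G heps j_gt0).
Qed.
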